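(* Let $$(W)\qquad w_{,t}=(w+1)\Bigl(w_2\Bigl(\frac{1}{w_1}+1\Bigr)w-w\Bigl(\frac{1}{w_{-1}}+1\Bigr)w_{-2}+w_1-w_{-1}\Bigr).$$ In each of the following cases, if $u(n,t)$ is a solution of the given lattice equation, then $w(n,t)$ defined by the given formula is a solution of $(W)$: (a) $\tfrac12u_{,t}=\frac{1}{\frac{2}{u_2-u}+\frac{1}{u-u_1}+\frac{1}{u-u_{-1}}}-\frac{1}{\frac{2}{u_{-2}-u}+\frac{1}{u-u_1}+\frac{1}{u-u_{-1}}}$, with $w=\frac{1}{2\frac{(u_3-u_2)(u_1-u)}{(u_3-u_1)(u_2-u)}-1}$; (c) $\tfrac14u_{,t}=\frac{1}{\frac{(u_2-u+2)(u_1-u-1)(u_{-1}-u-1)}{(u_2-u-2)(u_1-u+1)(u_{-1}-u+1)}-1}+\frac{1}{\frac{(u_{-2}-u-2)(u_1-u+1)(u_{-1}-u+1)}{(u_{-2}-u+2)(u_1-u-1)(u_{-1}-u-1)}-1}$, with $w=\frac{(u_3-2u_2+u_1)(u_2-2u_1+u)}{2-2(u_2-u_1)^2-(u_3-2u_2+u_1)(u_2-2u_1+u)}$; (d) $u_{,t}=\frac{u-u_{-1}}{u_1-u_{-1}+\frac{u-u_1}{u-u_2}}-\frac{u-u_1}{u_1-u_{-1}+\frac{u-u_{-1}}{u-u_{-2}}}$, with $w=-\frac{1}{1+\frac{u_2-u_1}{(u_3-u_1)(u_2-u)}}$; (f) $u_{,t}=u\frac{(1-\frac{u}{u_2})(1-\frac{u_{-1}}{u})}{1-\frac{u}{u_1}}+u\frac{(1-\frac{u_{-2}}{u})(1-\frac{u}{u_1})}{1-\frac{u_{-1}}{u}}$,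 with $w=\frac{u}{u_1}-1$; (h) $u_{,t}=u\frac{(1-\frac{u}{u_2})(1+\frac{u_{-1}}{u})}{1+\frac{u}{u_1}}+u\frac{(1-\frac{u_{-2}}{u})(1+\frac{u}{u_1})}{1+\frac{u_{-1}}{u}}$, with $w=-\frac{u}{u_1}-1$; (i) for a constant $\gamma\neq0$ with $\gamma^2\neq-1$: $-\frac{1}{1+\gamma^2}u_{,t}=\frac{(u-\gamma u_{-1})(u-\gamma u_1)(u-\gamma^{-2}u_2)}{(\gamma u_{-1}-u)(\gamma u_1-u_2)-(\gamma u-u_1)(u_{-1}-\gamma u_2)}-\frac{(u-\gamma^{-1}u_{-1})(u-\gamma^{-1}u_1)(u-\gamma^2u_{-2})}{(\gamma u_{-2}-u_{-1})(\gamma u-u_1)-(\gamma u_{-1}-u)(u_{-2}-\gamma u_1)}$, with $w=\frac{\gamma(u-(\gamma^{-1}+\gamma)u_1+u_2)(u_1-(\gamma^{-1}+\gamma)u_2+u_3)}{(\gamma u-u_1)(\gamma u_2-u_3)-(\gamma u_1-u_2)(u-\gamma u_3)}$.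
   Context: Here $u=u(n,t)$, $u_m=u(n+m,t)$, $w=w(n,t)$, $w_m=w(n+m,t)$ for $n\in\mathbb Z$, and ${,t}$ denotes $\partial/\partial t$. *)

From Stdlib Require Import Reals ZArith.
From Coquelicot Require Import Coquelicot.
Open Scope R_scope.

(* A "snapshot" of a lattice field at a fixed time: v : Z -> R.
   sh v n k = v_{n+k}  (i.e. u_k in the paper's notation, at site n). *)
Definition sh (v : Z -> R) (n k : Z) : R := v (n + k)%Z.

Definition solves (c : R) (F : (Z -> R) -> Z -> R) (u : Z -> R -> R) : Prop :=
  forall (n : Z) (t : R), exists d : R,
    is_derive (fun s => u n s) t d /\ c * d = F (fun m => u m t) n.

Definition W_rhs (w : Z -> R) (n : Z) : R :=
  let w0 := sh w n 0 in let w1 := sh w n 1 in let w2 := sh w n 2 in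
  let wm1 := sh w n (-1) in let wm2 := sh w n (-2) in
  (w0 + 1) * (w2 * (1 / w1 + 1) * w0 - w0 * (1 / wm1 + 1) * wm2 + w1 - wm1).

(* [transforms c F ND G]: every solution u of  c u_t = F(u)  for which all the
   denominators in F and in the formula G are nonzero (predicate ND, imposed at
   every site and time), and for which the resulting w = G(u) never vanishes
   (so that the denominators w_{1}, w_{-1} of (W) are nonzero), yields
   w(n,t) = G(u(.,t))(n) solving (W). *)
Definition transforms (c : R) (F : (Z -> R) -> Z -> R)
    (ND : (Z -> R) -> Z -> Prop) (G : (Z -> R) -> Z -> R) : Prop :=
  forall u : Z -> R -> R,
    solves c F u ->
    (forall n t, ND (fun m => u m t) n) ->
    (forall n t, G (fun m => u m t) n <> 0) ->
    solves 1 W_rhs (fun n t => G (fun m => u m t) n).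

Definition Fa (v : Z -> R) (n : Z) : R :=
  let u := sh v n 0 in let u1 := sh v n 1 in let u2 := sh v n 2 in
  let um1 := sh v n (-1) in let um2 := sh v n (-2) in
  1 / (2 / (u2 - u) + 1 / (u - u1) + 1 / (u - um1))
  - 1 / (2 / (um2 - u) + 1 / (u - u1) + 1 / (u - um1)).
Definition Ga (v : Z -> R) (n : Z) : R :=
  let u := sh v n 0 in let u1 := sh v n 1 in let u2 := sh v n 2 in
  let u3 := sh v n 3 in
  1 / (2 * (((u3 - u2) * (u1 - u)) / ((u3 - u1) * (u2 - u))) - 1).
Definition NDa (v : Z -> R) (n : Z) : Prop :=
  let u := sh v n 0 in let u1 := sh v n 1 in let u2 := sh v n 2 in
  let u3 := sh v n 3 in let um1 := sh v n (-1) in let um2 := sh v n (-2) in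
  u2 - u <> 0 /\ u - u1 <> 0 /\ u - um1 <> 0 /\ um2 - u <> 0 /\
  2 / (u2 - u) + 1 / (u - u1) + 1 / (u - um1) <> 0 /\
  2 / (um2 - u) + 1 / (u - u1) + 1 / (u - um1) <> 0 /\
  u3 - u1 <> 0 /\
  2 * (((u3 - u2) * (u1 - u)) / ((u3 - u1) * (u2 - u))) - 1 <> 0.

Definition Fc (v : Z -> R) (n : Z) : R :=
  let u := sh v n 0 in let u1 := sh v n 1 in let u2 := sh v n 2 in
  let um1 := sh v n (-1) in let um2 := sh v n (-2) in
  1 / ((u2 - u + 2) * (u1 - u - 1) * (um1 - u - 1)
        / ((u2 - u - 2) * (u1 - u + 1) * (um1 - u + 1)) - 1)
  + 1 / ((um2 - u - 2) * (u1 - u + 1) * (um1 - u + 1)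
        / ((um2 - u + 2) * (u1 - u - 1) * (um1 - u - 1)) - 1).
Definition Gc (v : Z -> R) (n : Z) : R :=
  let u := sh v n 0 in let u1 := sh v n 1 in let u2 := sh v n 2 in
  let u3 := sh v n 3 in
  (u3 - 2 * u2 + u1) * (u2 - 2 * u1 + u)
  / (2 - 2 * (u2 - u1) ^ 2 - (u3 - 2 * u2 + u1) * (u2 - 2 * u1 + u)).
Definition NDc (v : Z -> R) (n : Z) : Prop :=
  let u := sh v n 0 in let u1 := sh v n 1 in let u2 := sh v n 2 in
  let u3 := sh v n 3 in let um1 := sh v n (-1) in let um2 := sh v n (-2) in
  u2 - u - 2 <> 0 /\ u1 - u + 1 <> 0 /\ um1 - u + 1 <> 0 /\
  um2 - u + 2 <> 0 /\ u1 - u - 1 <> 0 /\ um1 - u - 1 <> 0 /\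
  (u2 - u + 2) * (u1 - u - 1) * (um1 - u - 1)
    / ((u2 - u - 2) * (u1 - u + 1) * (um1 - u + 1)) - 1 <> 0 /\
  (um2 - u - 2) * (u1 - u + 1) * (um1 - u + 1)
    / ((um2 - u + 2) * (u1 - u - 1) * (um1 - u - 1)) - 1 <> 0 /\
  2 - 2 * (u2 - u1) ^ 2 - (u3 - 2 * u2 + u1) * (u2 - 2 * u1 + u) <> 0.

Definition Fd (v : Z -> R) (n : Z) : R :=
  let u := sh v n 0 in let u1 := sh v n 1 in let u2 := sh v n 2 in
  let um1 := sh v n (-1) in let um2 := sh v n (-2) in
  (u - um1) / (u1 - um1 + (u - u1) / (u - u2))
  - (u - u1) / (u1 - um1 + (u - um1) / (u - um2)).
Definition Gd (v : Z -> R) (n : Z) : R :=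
  let u := sh v n 0 in let u1 := sh v n 1 in let u2 := sh v n 2 in
  let u3 := sh v n 3 in
  - (1 / (1 + (u2 - u1) / ((u3 - u1) * (u2 - u)))).
Definition NDd (v : Z -> R) (n : Z) : Prop :=
  let u := sh v n 0 in let u1 := sh v n 1 in let u2 := sh v n 2 in
  let u3 := sh v n 3 in let um1 := sh v n (-1) in let um2 := sh v n (-2) in
  u - u2 <> 0 /\ u - um2 <> 0 /\
  u1 - um1 + (u - u1) / (u - u2) <> 0 /\
  u1 - um1 + (u - um1) / (u - um2) <> 0 /\
  u3 - u1 <> 0 /\
  1 + (u2 - u1) / ((u3 - u1) * (u2 - u)) <> 0.

Definition Ff (v : Z -> R) (n : Z) : R :=
  let u := sh v n 0 in let u1 := sh v n 1 in let u2 := sh v n 2 in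
  let um1 := sh v n (-1) in let um2 := sh v n (-2) in
  u * ((1 - u / u2) * (1 - um1 / u)) / (1 - u / u1)
  + u * ((1 - um2 / u) * (1 - u / u1)) / (1 - um1 / u).
Definition Gf (v : Z -> R) (n : Z) : R :=
  let u := sh v n 0 in let u1 := sh v n 1 in u / u1 - 1.
Definition NDf (v : Z -> R) (n : Z) : Prop :=
  let u := sh v n 0 in let u1 := sh v n 1 in let um1 := sh v n (-1) in
  u <> 0 /\ 1 - u / u1 <> 0 /\ 1 - um1 / u <> 0.

Definition Fh (v : Z -> R) (n : Z) : R :=
  let u := sh v n 0 in let u1 := sh v n 1 in let u2 := sh v n 2 in
  let um1 := sh v n (-1) in let um2 := sh v n (-2) in
  u * ((1 - u / u2) * (1 + um1 / u)) / (1 + u / u1)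
  + u * ((1 - um2 / u) * (1 + u / u1)) / (1 + um1 / u).
Definition Gh (v : Z -> R) (n : Z) : R :=
  let u := sh v n 0 in let u1 := sh v n 1 in - (u / u1) - 1.
Definition NDh (v : Z -> R) (n : Z) : Prop :=
  let u := sh v n 0 in let u1 := sh v n 1 in let um1 := sh v n (-1) in
  u <> 0 /\ 1 + u / u1 <> 0 /\ 1 + um1 / u <> 0.

Definition Fi (g : R) (v : Z -> R) (n : Z) : R :=
  let u := sh v n 0 in let u1 := sh v n 1 in let u2 := sh v n 2 in
  let um1 := sh v n (-1) in let um2 := sh v n (-2) in
  (u - g * um1) * (u - g * u1) * (u - / (g ^ 2) * u2)
    / ((g * um1 - u) * (g * u1 - u2) - (g * u - u1) * (um1 - g * u2))
  - (u - / g * um1) * (u - / g * u1) * (u - g ^ 2 * um2)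
    / ((g * um2 - um1) * (g * u - u1) - (g * um1 - u) * (um2 - g * u1)).
Definition Gi (g : R) (v : Z -> R) (n : Z) : R :=
  let u := sh v n 0 in let u1 := sh v n 1 in let u2 := sh v n 2 in
  let u3 := sh v n 3 in
  g * (u - (/ g + g) * u1 + u2) * (u1 - (/ g + g) * u2 + u3)
  / ((g * u - u1) * (g * u2 - u3) - (g * u1 - u2) * (u - g * u3)).
Definition NDi (g : R) (v : Z -> R) (n : Z) : Prop :=
  let u := sh v n 0 in let u1 := sh v n 1 in let u2 := sh v n 2 in
  let u3 := sh v n 3 in let um1 := sh v n (-1) in let um2 := sh v n (-2) in
  (g * um1 - u) * (g * u1 - u2) - (g * u - u1) * (um1 - g * u2) <> 0 /\
  (g * um2 - um1) * (g * u - u1) - (g * um1 - u) * (um2 - g * u1) <> 0 /\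
  (g * u - u1) * (g * u2 - u3) - (g * u1 - u2) * (u - g * u3) <> 0.

From Stdlib Require Import Reals ZArith Lra.
From Coquelicot Require Import Coquelicot.
Open Scope R_scope.

(* In every case w is a quotient N/D of polynomials in u, u_1, u_2, u_3, so w_t
   follows from the chain and quotient rules. In cases (a), (c), (d), (i) the
   u-equation has the form c u_t = P/D_{-1} - Q/D_{-2}, where D_j is the
   denominator of w at site j. Multiplying w_t - W(w) at site 0 by D_0^2 and
   collecting terms by denominator leaves sum_{j=-2..2} Y_j / D_j, and each
   residue Y_j is a polynomial multiple q_j D_j with q_{-2} + ... + q_2 = 0
   (the q_j come from polynomial division), so the sum vanishes. Cases (f)
   and (h) are small enough for a direct computation. *)

Definition derives_along (ND : (Z -> R) -> Z -> Prop) (G : (Z -> R) -> Z -> R)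
    (Gdot : (Z -> R) -> (Z -> R) -> Z -> R) : Prop :=
  forall (u : Z -> R -> R) (du : Z -> R) (t : R) (n : Z),
    (forall m s, ND (fun k => u k s) m) ->
    (forall m, is_derive (fun s => u m s) t (du m)) ->
    is_derive (fun s => G (fun m => u m s) n) t (Gdot (fun m => u m t) du n).

Lemma transforms_of_flow_identity c F ND G Gdot :
  c <> 0 -> derives_along ND G Gdot ->
  (forall v n, (forall m, ND v m) -> (forall m, G v m <> 0) ->
     Gdot v (fun m => F v m / c) n = W_rhs (G v) n) ->
  transforms c F ND G.
Proof.
  intros Hc Hder Hid u Hu Hnd Hnz n t.
  exists (Gdot (fun m => u m t) (fun m => F (fun k => u k t) m / c) n); split.
  - apply Hder; [exact Hnd |]. intros m.
    destruct (Hu m t) as [d [Hd Hcd]].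
    replace (F _ m / c) with d by (rewrite <- Hcd; field; exact Hc).
    exact Hd.
  - rewrite Rmult_1_l. apply Hid; intros m; [apply Hnd | apply Hnz].
Qed.

Definition is_derive4 (f : R -> R -> R -> R -> R)
    (df : R -> R -> R -> R -> R -> R -> R -> R -> R) : Prop :=
  forall (a0 a1 a2 a3 : R -> R) (t d0 d1 d2 d3 : R),
    is_derive a0 t d0 -> is_derive a1 t d1 -> is_derive a2 t d2 -> is_derive a3 t d3 ->
    is_derive (fun s => f (a0 s) (a1 s) (a2 s) (a3 s)) t
      (df (a0 t) (a1 t) (a2 t) (a3 t) d0 d1 d2 d3).

(* auto_derive writes the derivative of [a] as [Derive (fun x => a x) t], which
   ring does not identify with [Derive a t]. *)
Ltac solve_is_derive4 :=
  let a0 := fresh "a" in let a1 := fresh "a" in let a2 := fresh "a" in let a3 := fresh "a" in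
  let t := fresh "t" in
  let d0 := fresh "d" in let d1 := fresh "d" in let d2 := fresh "d" in let d3 := fresh "d" in
  let H0 := fresh "H" in let H1 := fresh "H" in let H2 := fresh "H" in let H3 := fresh "H" in
  intros a0 a1 a2 a3 t d0 d1 d2 d3 H0 H1 H2 H3;
  auto_derive; [repeat split; eexists; eassumption |];
  replace (Derive (fun x => a0 x) t) with d0 by (symmetry; apply is_derive_unique, H0);
  replace (Derive (fun x => a1 x) t) with d1 by (symmetry; apply is_derive_unique, H1);
  replace (Derive (fun x => a2 x) t) with d2 by (symmetry; apply is_derive_unique, H2);
  replace (Derive (fun x => a3 x) t) with d3 by (symmetry; apply is_derive_unique, H3);
  ring.

Definition on_window (f : R -> R -> R -> R -> R) (v : Z -> R) (n : Z) : R :=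
  f (sh v n 0) (sh v n 1) (sh v n 2) (sh v n 3).

Definition quotient_rule_num (N D : R -> R -> R -> R -> R)
    (dN dD : R -> R -> R -> R -> R -> R -> R -> R -> R)
    (x0 x1 x2 x3 d0 d1 d2 d3 : R) : R :=
  dN x0 x1 x2 x3 d0 d1 d2 d3 * D x0 x1 x2 x3
  - N x0 x1 x2 x3 * dD x0 x1 x2 x3 d0 d1 d2 d3.

Definition quotient_rule_linear (N D : R -> R -> R -> R -> R)
    (dN dD : R -> R -> R -> R -> R -> R -> R -> R -> R) : Prop :=
  forall x0 x1 x2 x3 d0 d1 d2 d3,
    quotient_rule_num N D dN dD x0 x1 x2 x3 d0 d1 d2 d3
    = quotient_rule_num N D dN dD x0 x1 x2 x3 1 0 0 0 * d0
      + quotient_rule_num N D dN dD x0 x1 x2 x3 0 1 0 0 * d1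
      + quotient_rule_num N D dN dD x0 x1 x2 x3 0 0 1 0 * d2
      + quotient_rule_num N D dN dD x0 x1 x2 x3 0 0 0 1 * d3.

Definition quotient_derive (N D : R -> R -> R -> R -> R)
    (dN dD : R -> R -> R -> R -> R -> R -> R -> R -> R) (v dv : Z -> R) (n : Z) : R :=
  quotient_rule_num N D dN dD (sh v n 0) (sh v n 1) (sh v n 2) (sh v n 3)
    (dv (n + 0)%Z) (dv (n + 1)%Z) (dv (n + 2)%Z) (dv (n + 3)%Z)
  / on_window D v n ^ 2.

Lemma derives_along_quotient ND G N D dN dD :
  (forall v n, (forall m, ND v m) -> G v n = on_window N v n / on_window D v n) ->
  (forall v n, (forall m, ND v m) -> on_window D v n <> 0) ->
  is_derive4 N dN -> is_derive4 D dD ->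
  derives_along ND G (quotient_derive N D dN dD).
Proof.
  intros HG HD HN HD' u du t n Hnd Hdu.
  apply (is_derive_ext (fun s => on_window N (fun m => u m s) n / on_window D (fun m => u m s) n)).
  { intros s; symmetry; apply HG; intros m; apply Hnd. }
  exact (is_derive_div _ _ t _ _
    (HN _ _ _ _ t _ _ _ _ (Hdu _) (Hdu _) (Hdu _) (Hdu _))
    (HD' _ _ _ _ t _ _ _ _ (Hdu _) (Hdu _) (Hdu _) (Hdu _))
    (HD _ n (fun m => Hnd m t))).
Qed.

Lemma transforms_of_quotient c F ND G N D dN dD :
  c <> 0 ->
  (forall v n, (forall m, ND v m) -> G v n = on_window N v n / on_window D v n) ->
  (forall v n, (forall m, ND v m) -> on_window D v n <> 0) ->
  is_derive4 N dN -> is_derive4 D dD ->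
  (forall v n, (forall m, ND v m) -> (forall m, G v m <> 0) ->
     quotient_derive N D dN dD v (fun m => F v m / c) n = W_rhs (G v) n) ->
  transforms c F ND G.
Proof.
  intros Hc HG HD HdN HdD.
  apply transforms_of_flow_identity; [exact Hc |].
  apply derives_along_quotient; assumption.
Qed.

Definition W_stencil (wm2 wm1 w0 w1 w2 : R) : R :=
  (w0 + 1) * (w2 * (1 / w1 + 1) * w0 - w0 * (1 / wm1 + 1) * wm2 + w1 - wm1).

Lemma W_rhs_eq w n :
  W_rhs w n = W_stencil (w (n + -2)%Z) (w (n + -1)%Z) (w (n + 0)%Z) (w (n + 1)%Z) (w (n + 2)%Z).
Proof. reflexivity. Qed.

Lemma sh_shift v n k j l : (k + j)%Z = l -> sh v (n + k) j = sh v n l.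
Proof. intros <-; unfold sh; f_equal; ring. Qed.

Ltac normalize_sites :=
  repeat match goal with
  | |- context [sh ?v (?n + ?k) ?j] =>
      let l := eval compute in (k + j)%Z in rewrite (sh_shift v n k j l eq_refl)
  | H : context [sh ?v (?n + ?k) ?j] |- _ =>
      let l := eval compute in (k + j)%Z in rewrite (sh_shift v n k j l eq_refl) in H
  end.

Definition quotient_flow (P Q D : R -> R -> R -> R -> R) (xm2 xm1 x0 x1 x2 : R) : R :=
  P xm1 x0 x1 x2 / D xm1 x0 x1 x2 - Q xm2 xm1 x0 x1 / D xm2 xm1 x0 x1.

Section Residues.
Variables (c : R) (N D P Q : R -> R -> R -> R -> R)
  (dN dD : R -> R -> R -> R -> R -> R -> R -> R -> R).
Variables (xm2 xm1 x0 x1 x2 x3 x4 x5 : R).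

(* [Ck] is the coefficient of the velocity of u_k in D_0^2 w_t. *)
Local Notation C0 := (quotient_rule_num N D dN dD x0 x1 x2 x3 1 0 0 0).
Local Notation C1 := (quotient_rule_num N D dN dD x0 x1 x2 x3 0 1 0 0).
Local Notation C2 := (quotient_rule_num N D dN dD x0 x1 x2 x3 0 0 1 0).
Local Notation C3 := (quotient_rule_num N D dN dD x0 x1 x2 x3 0 0 0 1).
Local Notation N0 := (N x0 x1 x2 x3).
Local Notation D0 := (D x0 x1 x2 x3).

(* [residue_j] collects the terms of D_0^2 (w_t - W(w)) whose denominator is the
   [D] of the window starting at site j. *)
Definition residue_m2 : R :=
  - (C0 * Q xm2 xm1 x0 x1) / c
  + (N0 + D0) * N0 * (D xm1 x0 x1 x2 / N xm1 x0 x1 x2 + 1) * N xm2 xm1 x0 x1.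
Definition residue_m1 : R :=
  (C0 * P xm1 x0 x1 x2 - C1 * Q xm1 x0 x1 x2) / c + (N0 + D0) * N xm1 x0 x1 x2 * D0.
Definition residue_0 : R := (C1 * P x0 x1 x2 x3 - C2 * Q x0 x1 x2 x3) / c.
Definition residue_1 : R :=
  (C2 * P x1 x2 x3 x4 - C3 * Q x1 x2 x3 x4) / c - (N0 + D0) * N x1 x2 x3 x4 * D0.
Definition residue_2 : R :=
  C3 * P x2 x3 x4 x5 / c
  - (N0 + D0) * N x2 x3 x4 x5 * (D x1 x2 x3 x4 / N x1 x2 x3 x4 + 1) * N0.

Definition residue_sum : R :=
  residue_m2 / D xm2 xm1 x0 x1 + residue_m1 / D xm1 x0 x1 x2 + residue_0 / D0
  + residue_1 / D x1 x2 x3 x4 + residue_2 / D x2 x3 x4 x5.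

Lemma W_of_quotient_flow :
  c <> 0 ->
  D xm2 xm1 x0 x1 <> 0 -> D xm1 x0 x1 x2 <> 0 -> D0 <> 0 ->
  D x1 x2 x3 x4 <> 0 -> D x2 x3 x4 x5 <> 0 ->
  N xm1 x0 x1 x2 <> 0 -> N x1 x2 x3 x4 <> 0 ->
  quotient_rule_linear N D dN dD ->
  residue_sum = 0 ->
  quotient_rule_num N D dN dD x0 x1 x2 x3
    (quotient_flow P Q D xm2 xm1 x0 x1 x2 / c)
    (quotient_flow P Q D xm1 x0 x1 x2 x3 / c)
    (quotient_flow P Q D x0 x1 x2 x3 x4 / c)
    (quotient_flow P Q D x1 x2 x3 x4 x5 / c) / D0 ^ 2
  = W_stencil (N xm2 xm1 x0 x1 / D xm2 xm1 x0 x1) (N xm1 x0 x1 x2 / D xm1 x0 x1 x2)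
      (N0 / D0) (N x1 x2 x3 x4 / D x1 x2 x3 x4) (N x2 x3 x4 x5 / D x2 x3 x4 x5).
Proof.
  intros Hc Hm2 Hm1 H0 H1 H2 HNm1 HN1 Hlin Hsum.
  rewrite Hlin; apply Rminus_diag_uniq.
  transitivity (residue_sum / D0 ^ 2).
  - unfold residue_sum, residue_m2, residue_m1, residue_0, residue_1, residue_2,
      quotient_flow, W_stencil.
    field; repeat split; assumption.
  - rewrite Hsum; unfold Rdiv; ring.
Qed.

End Residues.

Lemma partial_fractions_cancel (ym2 ym1 y0 y1 y2 Dm2 Dm1 D0 D1 D2 qm2 qm1 q0 q1 q2 : R) :
  Dm2 <> 0 -> Dm1 <> 0 -> D0 <> 0 -> D1 <> 0 -> D2 <> 0 ->
  ym2 = Dm2 * qm2 -> ym1 = Dm1 * qm1 -> y0 = D0 * q0 -> y1 = D1 * q1 -> y2 = D2 * q2 ->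
  qm2 + qm1 + q0 + q1 + q2 = 0 ->
  ym2 / Dm2 + ym1 / Dm1 + y0 / D0 + y1 / D1 + y2 / D2 = 0.
Proof.
  intros ? ? ? ? ? -> -> -> -> -> Hq.
  rewrite <- Hq; field; repeat split; assumption.
Qed.

Lemma transforms_of_residues c F ND G N D dN dD P Q :
  c <> 0 ->
  (forall v n, (forall m, ND v m) -> G v n = on_window N v n / on_window D v n) ->
  (forall v n, (forall m, ND v m) ->
     F v n = quotient_flow P Q D (sh v n (-2)) (sh v n (-1)) (sh v n 0) (sh v n 1) (sh v n 2)) ->
  (forall v n, ND v n -> on_window D v n <> 0) ->
  is_derive4 N dN -> is_derive4 D dD ->
  quotient_rule_linear N D dN dD ->
  (forall xm2 xm1 x0 x1 x2 x3 x4 x5,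
     D xm2 xm1 x0 x1 <> 0 -> D xm1 x0 x1 x2 <> 0 -> D x0 x1 x2 x3 <> 0 ->
     D x1 x2 x3 x4 <> 0 -> D x2 x3 x4 x5 <> 0 ->
     N xm1 x0 x1 x2 <> 0 -> N x1 x2 x3 x4 <> 0 ->
     residue_sum c N D P Q dN dD xm2 xm1 x0 x1 x2 x3 x4 x5 = 0) ->
  transforms c F ND G.
Proof.
  intros Hc HG HF HD HdN HdD Hlin Hres.
  apply (transforms_of_quotient _ _ _ _ N D dN dD Hc HG); [| exact HdN | exact HdD |].
  { intros v n Hnd; exact (HD v n (Hnd n)). }
  intros v n Hnd Hnz.
  assert (HDk : forall k, on_window D v (n + k) <> 0) by (intros k; apply HD, Hnd).
  assert (HNk : forall k, on_window N v (n + k) <> 0).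
  { intros k HN0; apply (Hnz (n + k)%Z); rewrite (HG _ _ Hnd), HN0; unfold Rdiv; ring. }
  pose proof (HDk (-2)%Z); pose proof (HDk (-1)%Z); pose proof (HDk 0%Z);
  pose proof (HDk 1%Z); pose proof (HDk 2%Z); pose proof (HNk (-1)%Z); pose proof (HNk 1%Z).
  clear HDk HNk.
  unfold quotient_derive; rewrite W_rhs_eq, !(HF v _ Hnd), !(HG v _ Hnd).
  unfold on_window in *; normalize_sites.
  apply W_of_quotient_flow; auto.
Qed.

Ltac neq_0 :=
  match goal with
  | |- _ <> 0 => assumption
  | H : _ <> 0 |- _ <> 0 => let Z := fresh in intro Z; apply H; lra
  end.

(* Proves [p <> 0] from [H : e <> 0] when the numerator of [e] over a common
   denominator is a multiple of p. *)
Ltac neq_0_from H :=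
  let Z := fresh in intro Z; apply H; field_simplify_eq; [lra | repeat split; neq_0 ..].

Ltac solve_neq_0 :=
  repeat split;
  first [neq_0 | match goal with H : _ <> 0 |- _ => solve [neq_0_from H] end].

Definition num_a (a b c d : R) : R := (d - b) * (c - a).
Definition den_a (a b c d : R) : R := 2 * (d - c) * (b - a) - (d - b) * (c - a).
Definition fwd_a (m1 u u1 u2 : R) : R := (u2 - u) * (u - u1) * (u - m1).
Definition bwd_a (m2 m1 u u1 : R) : R := (m2 - u) * (u - u1) * (u - m1).
Definition dnum_a (a b c d da db dc dd : R) : R := (dd - db) * (c - a) + (d - b) * (dc - da).
Definition dden_a (a b c d da db dc dd : R) : R :=
  2 * ((dd - dc) * (b - a) + (d - c) * (db - da)) - ((dd - db) * (c - a) + (d - b) * (dc - da)).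

Lemma Ga_eq v n : NDa v n -> Ga v n = on_window num_a v n / on_window den_a v n.
Proof.
  unfold NDa, Ga, on_window, num_a, den_a.
  generalize (sh v n (-2)) (sh v n (-1)) (sh v n 0) (sh v n 1) (sh v n 2) (sh v n 3).
  intros um2 um1 u u1 u2 u3 (? & ? & ? & ? & ? & ? & ? & ?).
  field; solve_neq_0.
Qed.

Lemma Fa_eq v n : NDa v n ->
  Fa v n = quotient_flow fwd_a bwd_a den_a (sh v n (-2)) (sh v n (-1)) (sh v n 0) (sh v n 1) (sh v n 2).
Proof.
  unfold NDa, Fa, quotient_flow, fwd_a, bwd_a, den_a.
  generalize (sh v n (-2)) (sh v n (-1)) (sh v n 0) (sh v n 1) (sh v n 2) (sh v n 3).
  intros um2 um1 u u1 u2 u3 (? & ? & ? & ? & ? & ? & ? & ?).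
  field; solve_neq_0.
Qed.

Lemma NDa_den_neq_0 v n : NDa v n -> on_window den_a v n <> 0.
Proof.
  unfold NDa, on_window, den_a.
  generalize (sh v n (-2)) (sh v n (-1)) (sh v n 0) (sh v n 1) (sh v n 2) (sh v n 3).
  intros um2 um1 u u1 u2 u3 (? & ? & ? & ? & ? & ? & ? & ?).
  solve_neq_0.
Qed.

Lemma residues_cancel_a xm2 xm1 x0 x1 x2 x3 x4 x5 :
  den_a xm2 xm1 x0 x1 <> 0 -> den_a xm1 x0 x1 x2 <> 0 -> den_a x0 x1 x2 x3 <> 0 ->
  den_a x1 x2 x3 x4 <> 0 -> den_a x2 x3 x4 x5 <> 0 ->
  num_a xm1 x0 x1 x2 <> 0 -> num_a x1 x2 x3 x4 <> 0 ->
  residue_sum (1 / 2) num_a den_a fwd_a bwd_a dnum_a dden_a xm2 xm1 x0 x1 x2 x3 x4 x5 = 0.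
Proof.
  set (q := 2 * (x1 - x0) * (x2 - x0) * (x3 - x1) * (x3 - x2)).
  intros ? ? ? ? ? HNm1 HN1.
  destruct (Rmult_neq_0_reg _ _ HNm1), (Rmult_neq_0_reg _ _ HN1).
  apply (partial_fractions_cancel _ _ _ _ _ _ _ _ _ _ 0 (- q) 0 q 0); try assumption;
    unfold residue_m2, residue_m1, residue_0, residue_1, residue_2, quotient_rule_num, q,
      num_a, den_a, fwd_a, bwd_a, dnum_a, dden_a in *;
    try (field; solve_neq_0); ring.
Qed.

Lemma transforms_a : transforms (1 / 2) Fa NDa Ga.
Proof.
  apply (transforms_of_residues _ _ _ _ num_a den_a dnum_a dden_a fwd_a bwd_a).
  - lra.
  - intros v n Hnd; exact (Ga_eq v n (Hnd n)).
  - intros v n Hnd; exact (Fa_eq v n (Hnd n)).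
  - exact NDa_den_neq_0.
  - unfold num_a, dnum_a; solve_is_derive4.
  - unfold den_a, dden_a; solve_is_derive4.
  - intros ? ? ? ? ? ? ? ?; unfold quotient_rule_num, num_a, den_a, dnum_a, dden_a; ring.
  - exact residues_cancel_a.
Qed.

Definition num_c (a b c d : R) : R := (d - 2 * c + b) * (c - 2 * b + a).
Definition den_c (a b c d : R) : R := 2 - 2 * (c - b) ^ 2 - (d - 2 * c + b) * (c - 2 * b + a).
Definition fwd_c (m1 u u1 u2 : R) : R := (u2 - u - 2) * (u1 - u + 1) * (m1 - u + 1) / 2.
Definition bwd_c (m2 m1 u u1 : R) : R := (m2 - u + 2) * (u1 - u - 1) * (m1 - u - 1) / 2.
Definition dnum_c (a b c d da db dc dd : R) : R :=
  (dd - 2 * dc + db) * (c - 2 * b + a) + (d - 2 * c + b) * (dc - 2 * db + da).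
Definition dden_c (a b c d da db dc dd : R) : R :=
  - (4 * (c - b) * (dc - db))
  - ((dd - 2 * dc + db) * (c - 2 * b + a) + (d - 2 * c + b) * (dc - 2 * db + da)).

Lemma Fc_eq v n : NDc v n ->
  Fc v n = quotient_flow fwd_c bwd_c den_c (sh v n (-2)) (sh v n (-1)) (sh v n 0) (sh v n 1) (sh v n 2).
Proof.
  unfold NDc, Fc, quotient_flow, fwd_c, bwd_c, den_c.
  generalize (sh v n (-2)) (sh v n (-1)) (sh v n 0) (sh v n 1) (sh v n 2) (sh v n 3).
  intros um2 um1 u u1 u2 u3 (? & ? & ? & ? & ? & ? & ? & ? & ?).
  field; solve_neq_0.
Qed.

Lemma residues_cancel_c xm2 xm1 x0 x1 x2 x3 x4 x5 :
  den_c xm2 xm1 x0 x1 <> 0 -> den_c xm1 x0 x1 x2 <> 0 -> den_c x0 x1 x2 x3 <> 0 ->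
  den_c x1 x2 x3 x4 <> 0 -> den_c x2 x3 x4 x5 <> 0 ->
  num_c xm1 x0 x1 x2 <> 0 -> num_c x1 x2 x3 x4 <> 0 ->
  residue_sum (1 / 4) num_c den_c fwd_c bwd_c dnum_c dden_c xm2 xm1 x0 x1 x2 x3 x4 x5 = 0.
Proof.
  set (p := x1 - x0); set (e := x2 - x1); set (r := x3 - x2).
  set (qm2 := -4 * (r - e) * (p - 1) * (e ^ 2 - 1)).
  set (q2 := -4 * (e - p) * (r - 1) * (e ^ 2 - 1)).
  set (q1 := 2 * (e - 1) * (e ^ 3 + (1 + p + r) * e ^ 2 - (4 + p + r + 3 * p * r) * e
                             + 2 * p + 2 * r + p * r)).
  intros ? ? ? ? ? HNm1 HN1.
  destruct (Rmult_neq_0_reg _ _ HNm1), (Rmult_neq_0_reg _ _ HN1).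
  apply (partial_fractions_cancel _ _ _ _ _ _ _ _ _ _ qm2 (- q1) (- (qm2 + q2)) q1 q2);
    try assumption;
    unfold residue_m2, residue_m1, residue_0, residue_1, residue_2, quotient_rule_num, qm2, q1, q2, p, e, r,
      num_c, den_c, fwd_c, bwd_c, dnum_c, dden_c in *;
    try (field; solve_neq_0); ring.
Qed.

Lemma transforms_c : transforms (1 / 4) Fc NDc Gc.
Proof.
  apply (transforms_of_residues _ _ _ _ num_c den_c dnum_c dden_c fwd_c bwd_c).
  - lra.
  - intros v n _; reflexivity.
  - intros v n Hnd; exact (Fc_eq v n (Hnd n)).
  - intros v n (_ & _ & _ & _ & _ & _ & _ & _ & Hden); exact Hden.
  - unfold num_c, dnum_c; solve_is_derive4.
  - unfold den_c, dden_c; solve_is_derive4.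
  - intros ? ? ? ? ? ? ? ?; unfold quotient_rule_num, num_c, den_c, dnum_c, dden_c; ring.
  - exact residues_cancel_c.
Qed.

Definition num_d (a b c d : R) : R := (d - b) * (a - c).
Definition den_d (a b c d : R) : R := (d - b) * (c - a) + (c - b).
Definition fwd_d (m1 u u1 u2 : R) : R := - ((u - m1) * (u - u2)).
Definition bwd_d (m2 m1 u u1 : R) : R := (u - u1) * (u - m2).
Definition dnum_d (a b c d da db dc dd : R) : R := (dd - db) * (a - c) + (d - b) * (da - dc).
Definition dden_d (a b c d da db dc dd : R) : R :=
  (dd - db) * (c - a) + (d - b) * (dc - da) + (dc - db).

Lemma Gd_eq v n : NDd v n -> Gd v n = on_window num_d v n / on_window den_d v n.
Proof.
  unfold NDd, Gd, on_window, num_d, den_d.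
  generalize (sh v n (-2)) (sh v n (-1)) (sh v n 0) (sh v n 1) (sh v n 2) (sh v n 3).
  intros um2 um1 u u1 u2 u3 (? & ? & ? & ? & ? & ?).
  field; solve_neq_0.
Qed.

Lemma Fd_eq v n : NDd v n ->
  Fd v n = quotient_flow fwd_d bwd_d den_d (sh v n (-2)) (sh v n (-1)) (sh v n 0) (sh v n 1) (sh v n 2).
Proof.
  unfold NDd, Fd, quotient_flow, fwd_d, bwd_d, den_d.
  generalize (sh v n (-2)) (sh v n (-1)) (sh v n 0) (sh v n 1) (sh v n 2) (sh v n 3).
  intros um2 um1 u u1 u2 u3 (? & ? & ? & ? & ? & ?).
  field; solve_neq_0.
Qed.

Lemma NDd_den_neq_0 v n : NDd v n -> on_window den_d v n <> 0.
Proof.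
  unfold NDd, on_window, den_d.
  generalize (sh v n (-2)) (sh v n (-1)) (sh v n 0) (sh v n 1) (sh v n 2) (sh v n 3).
  intros um2 um1 u u1 u2 u3 (? & ? & ? & ? & ? & ?).
  solve_neq_0.
Qed.

Lemma residues_cancel_d xm2 xm1 x0 x1 x2 x3 x4 x5 :
  den_d xm2 xm1 x0 x1 <> 0 -> den_d xm1 x0 x1 x2 <> 0 -> den_d x0 x1 x2 x3 <> 0 ->
  den_d x1 x2 x3 x4 <> 0 -> den_d x2 x3 x4 x5 <> 0 ->
  num_d xm1 x0 x1 x2 <> 0 -> num_d x1 x2 x3 x4 <> 0 ->
  residue_sum 1 num_d den_d fwd_d bwd_d dnum_d dden_d xm2 xm1 x0 x1 x2 x3 x4 x5 = 0.
Proof.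
  set (q := (x2 - x0) * (x2 - x1) * (x3 - x1)).
  intros ? ? ? ? ? HNm1 HN1.
  destruct (Rmult_neq_0_reg _ _ HNm1), (Rmult_neq_0_reg _ _ HN1).
  apply (partial_fractions_cancel _ _ _ _ _ _ _ _ _ _ 0 (- q) 0 q 0); try assumption;
    unfold residue_m2, residue_m1, residue_0, residue_1, residue_2, quotient_rule_num, q,
      num_d, den_d, fwd_d, bwd_d, dnum_d, dden_d in *;
    try (field; solve_neq_0); ring.
Qed.

Lemma transforms_d : transforms 1 Fd NDd Gd.
Proof.
  apply (transforms_of_residues _ _ _ _ num_d den_d dnum_d dden_d fwd_d bwd_d).
  - lra.
  - intros v n Hnd; exact (Gd_eq v n (Hnd n)).
  - intros v n Hnd; exact (Fd_eq v n (Hnd n)).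
  - exact NDd_den_neq_0.
  - unfold num_d, dnum_d; solve_is_derive4.
  - unfold den_d, dden_d; solve_is_derive4.
  - intros ? ? ? ? ? ? ? ?; unfold quotient_rule_num, num_d, den_d, dnum_d, dden_d; ring.
  - exact residues_cancel_d.
Qed.

Definition num_i (g a b c d : R) : R :=
  g * (a - (/ g + g) * b + c) * (b - (/ g + g) * c + d).
Definition den_i (g a b c d : R) : R :=
  (g * a - b) * (g * c - d) - (g * b - c) * (a - g * d).
Definition fwd_i (g m1 u u1 u2 : R) : R := (u - g * m1) * (u - g * u1) * (u - / (g ^ 2) * u2).
Definition bwd_i (g m2 m1 u u1 : R) : R := (u - / g * m1) * (u - / g * u1) * (u - g ^ 2 * m2).
Definition dnum_i (g a b c d da db dc dd : R) : R :=
  g * ((da - (/ g + g) * db + dc) * (b - (/ g + g) * c + d)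
       + (a - (/ g + g) * b + c) * (db - (/ g + g) * dc + dd)).
Definition dden_i (g a b c d da db dc dd : R) : R :=
  (g * da - db) * (g * c - d) + (g * a - b) * (g * dc - dd)
  - (g * db - dc) * (a - g * d) - (g * b - c) * (da - g * dd).

Lemma cleared_neq_0 g a b c :
  g <> 0 -> a - (/ g + g) * b + c <> 0 -> a * g - (1 + g * g) * b + c * g <> 0.
Proof.
  intros Hg H Z; apply H.
  replace (a - (/ g + g) * b + c) with ((a * g - (1 + g * g) * b + c * g) / g) by (field; exact Hg).
  rewrite Z; unfold Rdiv; ring.
Qed.

Lemma residues_cancel_i g xm2 xm1 x0 x1 x2 x3 x4 x5 :
  g <> 0 -> 1 + g ^ 2 <> 0 ->
  den_i g xm2 xm1 x0 x1 <> 0 -> den_i g xm1 x0 x1 x2 <> 0 -> den_i g x0 x1 x2 x3 <> 0 ->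
  den_i g x1 x2 x3 x4 <> 0 -> den_i g x2 x3 x4 x5 <> 0 ->
  num_i g xm1 x0 x1 x2 <> 0 -> num_i g x1 x2 x3 x4 <> 0 ->
  residue_sum (- (1 / (1 + g ^ 2))) (num_i g) (den_i g) (fwd_i g) (bwd_i g) (dnum_i g) (dden_i g)
    xm2 xm1 x0 x1 x2 x3 x4 x5 = 0.
Proof.
  set (qm2 := (1 + g ^ 2) ^ 2 * (x1 - g * x0) * (x2 - g * x1) * (x1 - g * x2)
              * (g * x1 - (1 + g ^ 2) * x2 + g * x3) / g ^ 2).
  set (q2 := (1 + g ^ 2) ^ 2 * (x2 - g * x1) * (x1 - g * x2) * (x3 - g * x2)
             * (g * x0 - (1 + g ^ 2) * x1 + g * x2) / g ^ 3).
  set (q1 := (1 + g ^ 2) * (x2 - g * x1) / g ^ 2 *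
    (- g ^ 2 * x0 * x1 ^ 2 + g * (2 + 3 * g ^ 2) * x0 * x1 * x2 - g ^ 2 * (2 + g ^ 2) * x0 * x1 * x3
     - (1 + g ^ 2) ^ 2 * x0 * x2 ^ 2 + g * (1 + 2 * g ^ 2) * x0 * x2 * x3
     - g ^ 2 * (2 + g ^ 2) * x1 ^ 2 * x2 + g * (1 + g ^ 2) ^ 2 * x1 ^ 2 * x3
     + g * (1 + 2 * g ^ 2) * x1 * x2 ^ 2 - g ^ 2 * (3 + 2 * g ^ 2) * x1 * x2 * x3
     + g ^ 3 * x2 ^ 2 * x3)).
  intros Hg Hg2 ? ? ? ? ? HNm1 HN1.
  destruct (Rmult_neq_0_reg _ _ HNm1) as [[_ Am1]%Rmult_neq_0_reg A0].
  destruct (Rmult_neq_0_reg _ _ HN1) as [[_ A1]%Rmult_neq_0_reg A2].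
  apply (cleared_neq_0 _ _ _ _ Hg) in Am1, A0, A1, A2.
  apply (partial_fractions_cancel _ _ _ _ _ _ _ _ _ _ qm2 (- q1) (- (qm2 + q2)) q1 q2);
    try assumption;
    unfold residue_m2, residue_m1, residue_0, residue_1, residue_2, quotient_rule_num, qm2, q1, q2,
      num_i, den_i, fwd_i, bwd_i, dnum_i, dden_i in *;
    try (field; repeat split; assumption); ring.
Qed.

Lemma transforms_i g : g <> 0 -> g ^ 2 <> -1 ->
  transforms (- (1 / (1 + g ^ 2))) (Fi g) (NDi g) (Gi g).
Proof.
  intros Hg Hg2.
  assert (H1g2 : 1 + g ^ 2 <> 0) by lra.
  apply (transforms_of_residues _ _ _ _ (num_i g) (den_i g) (dnum_i g) (dden_i g) (fwd_i g) (bwd_i g)).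
  - apply Ropp_neq_0_compat; unfold Rdiv; rewrite Rmult_1_l; apply Rinv_neq_0_compat, H1g2.
  - intros v n _; reflexivity.
  - intros v n _; reflexivity.
  - intros v n (_ & _ & Hden); exact Hden.
  - unfold num_i, dnum_i; solve_is_derive4.
  - unfold den_i, dden_i; solve_is_derive4.
  - intros ? ? ? ? ? ? ? ?; unfold quotient_rule_num, num_i, den_i, dnum_i, dden_i; ring.
  - intros; apply residues_cancel_i; assumption.
Qed.

Lemma sub_neq_0_of_div a b : b <> 0 -> 1 - a / b <> 0 -> b - a <> 0.
Proof. intros Hb H Z; apply H; replace a with b by lra; field; exact Hb. Qed.

Lemma add_neq_0_of_div a b : b <> 0 -> 1 + a / b <> 0 -> b + a <> 0.
Proof. intros Hb H Z; apply H; replace a with (- b) by lra; field; exact Hb. Qed.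

Definition num_f (a b _c _d : R) : R := a - b.
Definition dnum_f (_a _b _c _d da db _dc _dd : R) : R := da - db.
Definition num_h (a b _c _d : R) : R := - (a + b).
Definition dnum_h (_a _b _c _d da db _dc _dd : R) : R := - (da + db).
Definition den_fh (_a b _c _d : R) : R := b.
Definition dden_fh (_a _b _c _d _da db _dc _dd : R) : R := db.

(* The condition at site n alone does not give u_1 <> 0 (u / 0 = 0 in Rocq); it
   comes from site n + 1. *)
Lemma den_fh_neq_0 ND :
  (forall v n, ND v n -> sh v n 0 <> 0) ->
  forall v n, (forall m, ND v m) -> on_window den_fh v n <> 0.
Proof.
  intros Hu v n Hnd; unfold on_window, den_fh.
  rewrite <- (sh_shift v n 1 0 1 eq_refl); exact (Hu _ _ (Hnd _)).
Qed.

Lemma transforms_f : transforms 1 Ff NDf Gf.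
Proof.
  pose proof (den_fh_neq_0 NDf (fun v n H => proj1 H)) as HD.
  apply (transforms_of_quotient _ _ _ _ num_f den_fh dnum_f dden_fh).
  - lra.
  - intros v n Hnd; specialize (HD v n Hnd); unfold Gf, on_window, num_f, den_fh in *.
    field; exact HD.
  - exact HD.
  - unfold num_f, dnum_f; solve_is_derive4.
  - unfold den_fh, dden_fh; solve_is_derive4.
  - intros v n Hnd _.
    pose proof (Hnd (n + -2)%Z); pose proof (Hnd (n + -1)%Z); pose proof (Hnd (n + 0)%Z);
    pose proof (Hnd (n + 1)%Z); pose proof (Hnd (n + 2)%Z); pose proof (Hnd (n + 3)%Z).
    unfold quotient_derive; rewrite W_rhs_eq.
    unfold Gf, Ff, NDf, W_stencil, on_window, quotient_rule_num, num_f, den_fh, dnum_f, dden_fh in *.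
    normalize_sites.
    repeat match goal with H : _ /\ _ |- _ => destruct H end.
    repeat match goal with Hb : ?b <> 0, H : 1 - ?a / ?b <> 0 |- _ =>
      apply (sub_neq_0_of_div _ _ Hb) in H end.
    field; solve_neq_0.
Qed.

Lemma transforms_h : transforms 1 Fh NDh Gh.
Proof.
  pose proof (den_fh_neq_0 NDh (fun v n H => proj1 H)) as HD.
  apply (transforms_of_quotient _ _ _ _ num_h den_fh dnum_h dden_fh).
  - lra.
  - intros v n Hnd; specialize (HD v n Hnd); unfold Gh, on_window, num_h, den_fh in *.
    field; exact HD.
  - exact HD.
  - unfold num_h, dnum_h; solve_is_derive4.
  - unfold den_fh, dden_fh; solve_is_derive4.
  - intros v n Hnd _.
    pose proof (Hnd (n + -2)%Z); pose proof (Hnd (n + -1)%Z); pose proof (Hnd (n + 0)%Z);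
    pose proof (Hnd (n + 1)%Z); pose proof (Hnd (n + 2)%Z); pose proof (Hnd (n + 3)%Z).
    unfold quotient_derive; rewrite W_rhs_eq.
    unfold Gh, Fh, NDh, W_stencil, on_window, quotient_rule_num, num_h, den_fh, dnum_h, dden_fh in *.
    normalize_sites.
    repeat match goal with H : _ /\ _ |- _ => destruct H end.
    repeat match goal with Hb : ?b <> 0, H : 1 + ?a / ?b <> 0 |- _ =>
      apply (add_neq_0_of_div _ _ Hb) in H end.
    field; solve_neq_0.
Qed.

Theorem mainTheorem5 :
  transforms (1 / 2) Fa NDa Ga /\
  transforms (1 / 4) Fc NDc Gc /\
  transforms 1 Fd NDd Gd /\
  transforms 1 Ff NDf Gf /\
  transforms 1 Fh NDh Gh /\
  (forall g : R, g <> 0 -> g ^ 2 <> -1 ->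
     transforms (- (1 / (1 + g ^ 2))) (Fi g) (NDi g) (Gi g)).
Proof.
  exact (conj transforms_a (conj transforms_c (conj transforms_d
           (conj transforms_f (conj transforms_h transforms_i))))).
Qed.
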